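(* Let $n\ge2$, $\nu\in\mathcal{F}_{C_n}$, $1\le k\le n$ and $\alpha$ a formula. Then: (1) if $\nu(\alpha)=T_n$ then $\nu(\alpha^k)=T_n$; (2) if $\nu(\alpha)=t^n_i$ for some $0\le i\le k-2$ then $\nu(\alpha^k)=T_n$; (3) if $\nu(\alpha)=t^n_{k-1}$ then $\nu(\alpha^k)=F_n$; (4) if $\nu(\alpha)=t^n_i$ for some $k\le i\le n-1$ then $\nu(\alpha^k)=t^n_{i-k}$; (5) if $\nu(\alpha)=F_n$ then $\nu(\alpha^k)=T_n$.
   Context: $\Sigma$ has unary $\neg$ and binary $\wedge,\vee,\to$; formulas over a denumerable set of variables; $\alpha^0=\alpha$, $\alpha^{k+1}=\neg(\alpha^k\wedge\neg\alpha^k)$. Fix $n\ge2$. $B_n=\{z\in\{0,1\}^{n+1}:(z_1\wedge\dots\wedge z_k)\vee z_{k+1}=1\text{ for all }1\le k\le n\}$; its elements are $T_n=(1,0,1,\dots,1)$, $t^n_i$ ($0\le i\le n-2$) the tuple with $z_1=z_2=1$ and a single $0$ at coordinate $i+3$, $t^n_{n-1}=(1,\dots,1)$, and $F_n=(0,1,\dots,1)$. $D_n=\{z\in B_n:z_1=1\}$, $Boo_n=\{T_n,F_n\}$, $I_n=B_n\setminus Boo_n$. The multialgebra $\mathcal{A}_{C_n}$ on $B_n$: $\tilde\neg z=\{w\in B_n:w_1=z_2,\ w_2\le z_1\}$; for $\#\in\{\wedge,\vee,\to\}$, $z\tilde\#w=\{u\in Boo_n:u_1=z_1\#w_1\}$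 if $z,w\in Boo_n$, and $\{u\in B_n:u_1=z_1\#w_1\}$ otherwise ($\#$ on $\{0,1\}$ Boolean). A valuation is a map $\nu$ from formulas to $B_n$ with $\nu(\neg\alpha)\in\tilde\neg\nu(\alpha)$ and $\nu(\alpha\#\beta)\in\nu(\alpha)\tilde\#\nu(\beta)$. $\mathcal{F}_{C_n}$ is the set of valuations such that for every $\alpha$: $\nu(\alpha)=t^n_0$ implies $\nu(\alpha\wedge\neg\alpha)=T_n$; and for $1\le k\le n-1$, $\nu(\alpha)=t^n_k$ implies $\nu(\alpha\wedge\neg\alpha)\in I_n$ and $\nu(\alpha^1)=t^n_{k-1}$. *)

From mathcomp Require Import all_boot.
Set Implicit Arguments. Unset Strict Implicit. Unset Printing Implicit Defensive.

Inductive form : Type :=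
| Var of nat
| Neg of form
| And of form & form
| Or of form & form
| Imp of form & form.

Fixpoint cpow (a : form) (k : nat) : form :=
  match k with
  | 0 => a
  | k'.+1 => Neg (And (cpow a k') (Neg (cpow a k')))
  end.

(* Snapshots: elements of {0,1}^(n+1) are sequences of booleans of size n+1.
   coord z k is the k-th coordinate z_k, 1-indexed as in the paper. *)
Definition coord (z : seq bool) (k : nat) : bool := nth false z k.-1.

Definition inB (n : nat) (z : seq bool) : bool :=
  (size z == n.+1) &&
  [forall k : 'I_n.+1, (1 <= k) ==>
     ((all (fun j => coord z j) (iota 1 k)) || coord z k.+1)].

(* Distinguished elements; the sequence index j corresponds to coordinate j+1 *)
Definition Tn (n : nat) : seq bool := mkseq (fun j => j != 1) n.+1.
Definition Fn (n : nat) : seq bool := mkseq (fun j => j != 0) n.+1.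
(* t^n_i: z_1 = z_2 = 1 and a single 0 at coordinate i+3 (for i <= n-2);
   t^n_(n-1) = (1,...,1) *)
Definition tn (n i : nat) : seq bool := mkseq (fun j => j != i.+2) n.+1.

Definition inBoo (n : nat) (z : seq bool) : bool := (z == Tn n) || (z == Fn n).
Definition inI (n : nat) (z : seq bool) : bool := inB n z && ~~ inBoo n z.

(* multioperations: membership w \in neg~ z, u \in z #~ w *)
Definition negm (n : nat) (z w : seq bool) : bool :=
  [&& inB n w, coord w 1 == coord z 2 & coord w 2 <= coord z 1].

Definition binm (n : nat) (op : bool -> bool -> bool) (z w u : seq bool) : bool :=
  if inBoo n z && inBoo n w then inBoo n u && (coord u 1 == op (coord z 1) (coord w 1))
  else inB n u && (coord u 1 == op (coord z 1) (coord w 1)).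

Definition valuation (n : nat) (v : form -> seq bool) : Prop :=
  (forall a, inB n (v a)) /\
  (forall a, negm n (v a) (v (Neg a))) /\
  (forall a b, binm n andb (v a) (v b) (v (And a b))) /\
  (forall a b, binm n orb (v a) (v b) (v (Or a b))) /\
  (forall a b, binm n implb (v a) (v b) (v (Imp a b))).

Definition inFCn (n : nat) (v : form -> seq bool) : Prop :=
  valuation n v /\
  (forall a, v a = tn n 0 -> v (And a (Neg a)) = Tn n) /\
  (forall a k, 1 <= k <= n.-1 -> v a = tn n k ->
      inI n (v (And a (Neg a))) /\ v (cpow a 1) = tn n k.-1).

From mathcomp Require Import all_boot zify.

Set Implicit Arguments.

(* Everything follows from the behaviour of the single step
   alpha |-> alpha^1 = neg (alpha /\ neg alpha):
   - on Boolean values it acts like classical logic, sending both T_n and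
     F_n to T_n (the multioperations restricted to Boo_n are the Boolean
     truth tables, and a snapshot of B_n with z_1 = 0, or with z_1 = 1 and
     z_2 = 0, is forced to be F_n, resp. T_n);
   - on t^n_0 it yields F_n, and on t^n_i (1 <= i <= n-1) it yields
     t^n_(i-1); both are axioms of F_{C_n}. *)

Lemma cpow_add a p q : cpow (cpow a p) q = cpow a (p + q).
Proof. by elim: q => [|q IH] /=; rewrite ?addn0 ?addnS //= IH. Qed.

Lemma inB_next_coord n z k : inB n z -> 1 <= k <= n ->
  ~~ all (fun j => coord z j) (iota 1 k) -> coord z k.+1.
Proof.
move=> /andP[_ /forallP Hz] /andP[k_gt0 k_le_n] not_all.
have /implyP/(_ k_gt0) := Hz (Ordinal (k_le_n : k < n.+1)).
by rewrite /= (negbTE not_all).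
Qed.

(* A snapshot with z_1 = 0 is F_n: every later coordinate is forced to 1. *)
Lemma inB_coord1_false n z : inB n z -> coord z 1 = false -> z = Fn n.
Proof.
move=> Hz z1.
have size_z : size z = n.+1 by case/andP: Hz => /eqP.
apply: (@eq_from_nth _ false); first by rewrite size_mkseq.
move=> [|j]; rewrite size_z => j_lt; rewrite nth_mkseq //=.
apply: (@inB_next_coord n z j.+1 Hz); first by rewrite /= -ltnS.
by move: z1; rewrite /coord /= => ->.
Qed.

Lemma inB_coord12 n z : inB n z -> coord z 1 = true -> coord z 2 = false ->
  z = Tn n.
Proof.
move=> Hz z1 z2.
have size_z : size z = n.+1 by case/andP: Hz => /eqP.
apply: (@eq_from_nth _ false); first by rewrite size_mkseq.
move=> [|[|j]]; rewrite size_z => j_lt; rewrite nth_mkseq //=.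
apply: (@inB_next_coord n z j.+2 Hz); first by rewrite /= -ltnS.
by move: z1 z2; rewrite /coord /= => -> ->.
Qed.

Section BooleanSnapshots.
Variable n : nat.
Hypothesis n_gt0 : 0 < n.

Lemma Tn_Boo : inBoo n (Tn n). Proof. by rewrite /inBoo eqxx. Qed.
Lemma Fn_Boo : inBoo n (Fn n). Proof. by rewrite /inBoo eqxx orbT. Qed.

Lemma Tn_coord1 : coord (Tn n) 1 = true. Proof. by rewrite /coord nth_mkseq. Qed.
Lemma Tn_coord2 : coord (Tn n) 2 = false. Proof. by rewrite /coord nth_mkseq. Qed.
Lemma Fn_coord1 : coord (Fn n) 1 = false. Proof. by rewrite /coord nth_mkseq. Qed.
Lemma Fn_coord2 : coord (Fn n) 2 = true. Proof. by rewrite /coord nth_mkseq. Qed.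

End BooleanSnapshots.

Section Valuation.
Variables (n : nat) (v : form -> seq bool).
Hypotheses (n_gt0 : 0 < n) (v_val : valuation n v).

Lemma neg_Tn a : v a = Tn n -> v (Neg a) = Fn n.
Proof.
case: v_val => _ [neg_v _] va.
move: (neg_v a); rewrite va => /and3P[Hb /eqP neg1 _].
by apply: inB_coord1_false => //; rewrite neg1 Tn_coord2.
Qed.

Lemma neg_Fn a : v a = Fn n -> v (Neg a) = Tn n.
Proof.
case: v_val => _ [neg_v _] va.
move: (neg_v a); rewrite va => /and3P[Hb /eqP neg1].
rewrite Fn_coord1 => neg2.
apply: inB_coord12 => //; first by rewrite neg1 Fn_coord2.
by move: neg2; case: (coord _ 2).
Qed.

Lemma and_Boo_false a b : inBoo n (v a) -> inBoo n (v b) ->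
  coord (v a) 1 && coord (v b) 1 = false -> v (And a b) = Fn n.
Proof.
case: v_val => _ [_ [and_v _]] Ba Bb false_ab.
move: (and_v a b); rewrite /binm Ba Bb false_ab /=.
by case/andP => /orP[] /eqP -> //; rewrite Tn_coord1.
Qed.

Lemma cons_Tn a : v a = Tn n -> v (cpow a 1) = Tn n.
Proof.
move=> va; apply: neg_Fn; have vna := neg_Tn va.
by apply: and_Boo_false; rewrite ?va ?vna ?Tn_Boo ?Fn_Boo ?Fn_coord1 ?andbF.
Qed.

Lemma cons_Fn a : v a = Fn n -> v (cpow a 1) = Tn n.
Proof.
move=> va; apply: neg_Fn; have vna := neg_Fn va.
by apply: and_Boo_false; rewrite ?va ?vna ?Tn_Boo ?Fn_Boo ?Fn_coord1.
Qed.

Lemma cpow_Tn m a : v a = Tn n -> v (cpow a m) = Tn n.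
Proof. by move=> va; elim: m => [|m IH] //; exact: (cons_Tn IH). Qed.

Lemma cpow_Fn m a : v a = Fn n -> v (cpow a m.+1) = Tn n.
Proof. by move=> va; rewrite -add1n -cpow_add; apply/cpow_Tn/cons_Fn. Qed.

End Valuation.

Section FCnValuation.
Variables (n : nat) (v : form -> seq bool).
Hypotheses (n_gt0 : 0 < n) (hv : inFCn n v).

Lemma cons_t0 a : v a = tn n 0 -> v (cpow a 1) = Fn n.
Proof.
by case: hv => v_val [t0_ax _] va; apply: (neg_Tn n_gt0 v_val); exact: t0_ax.
Qed.

Lemma cons_t i a : 1 <= i <= n.-1 -> v a = tn n i -> v (cpow a 1) = tn n i.-1.
Proof. by case: hv => _ [_ t_ax] i_bnd va; case: (t_ax a i i_bnd va). Qed.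

Lemma cpow_t m i a : m <= i <= n.-1 -> v a = tn n i ->
  v (cpow a m) = tn n (i - m).
Proof.
elim: m => [|m IH] /andP[m_lt i_le] va; first by rewrite subn0.
rewrite subnS; apply: cons_t; last by apply: IH; rewrite // i_le ltnW.
by rewrite subn_gt0 m_lt (leq_trans (leq_subr _ _) i_le).
Qed.

Lemma cpow_t_Fn i a : i <= n.-1 -> v a = tn n i -> v (cpow a i.+1) = Fn n.
Proof.
move=> i_le va; apply: cons_t0.
by rewrite -(subnn i); apply: cpow_t; rewrite ?leqnn.
Qed.

End FCnValuation.

Theorem mainTheorem10 (n : nat) (hn : 2 <= n) (v : form -> seq bool)
  (hv : inFCn n v) (k : nat) (hk : 1 <= k <= n) (a : form) :
  (v a = Tn n -> v (cpow a k) = Tn n) /\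
  (forall i, i.+2 <= k -> v a = tn n i -> v (cpow a k) = Tn n) /\
  (v a = tn n k.-1 -> v (cpow a k) = Fn n) /\
  (forall i, k <= i <= n.-1 -> v a = tn n i -> v (cpow a k) = tn n (i - k)) /\
  (v a = Fn n -> v (cpow a k) = Tn n).
Proof.
have n_gt0 : 0 < n by lia.
have v_val : valuation n v := hv.1.
have k_succ : k = k.-1.+1 by lia.
split; first exact: cpow_Tn.
split.
  (* t^n_i reaches F_n after i+1 steps, then T_n. *)
  move=> i i_lt va; have -> : k = i.+1 + (k - i.+2).+1 by lia.
  rewrite -cpow_add; apply: (cpow_Fn n_gt0 v_val).
  by apply: (cpow_t_Fn n_gt0 hv) va; lia.
split; first by move=> va; rewrite k_succ; apply: (cpow_t_Fn n_gt0 hv) va; lia.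
split; first by move=> i i_bnd; apply: cpow_t.
by move=> va; rewrite k_succ; exact: cpow_Fn.
Qed.
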